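(* Let $T=(V_T,E_T)$ be a finite tree, $r\in V_T$, and $Q\subseteq V_T$ non-empty. Root $T$ at $r$, let $V_Q$ be the set of nodes whose subtree contains a node of $Q$, $T_Q$ the subtree induced by $V_Q$, $A_Q=\{u\in V_Q:\deg_{T_Q}(u)\ge 3\}$ and $Q'=Q\cup A_Q$. Let $Z=(V_Z,E_Z)$ be a connected subgraph of $T$ with $Q'\cap V_Z\ne\emptyset$. Then $Z$ has one or two $(Q'\cap V_Z)$-centroids.
   Context: For a tree $Z$ and a set $Q\subseteq V_Z$, a node $u\in Q$ is a $Q$-centroid of $Z$ if every connected component of $Z-u$ contains at most $|Q|/2$ nodes of $Q$. *)

From mathcomp Require Import all_boot.
From Stdlib Require Import ClassicalEpsilon.
Set Implicit Arguments. Unset Strict Implicit. Unset Printing Implicit Defensive.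

Definition pb (P : Prop) : bool :=
  if excluded_middle_informative P then true else false.

Definition simple_graph (V : finType) (e : rel V) : Prop :=
  symmetric e /\ irreflexive e.

Definition acyclic (V : finType) (e : rel V) : Prop :=
  forall c : seq V, uniq c -> 3 <= size c -> ~~ cycle e c.

(* A finite tree: connected acyclic simple graph (with at least one vertex,
   which is implied by the root r below). *)
Definition is_tree (V : finType) (e : rel V) : Prop :=
  [/\ simple_graph e, (forall x y : V, connect e x y) & acyclic e].

(* u lies on the (unique) simple path from r to q, i.e. q is in the subtree
   of u when the tree is rooted at r. *)
Definition on_path (V : finType) (e : rel V) (r q u : V) : Prop :=
  exists p : seq V, [/\ path e r p, last r p = q, uniq (r :: p) & u \in r :: p].

Definition VQ (V : finType) (e : rel V) (r : V) (Q : {set V}) : {set V} :=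
  [set u | pb (exists2 q, q \in Q & on_path e r q u)].

Definition degTQ (V : finType) (e : rel V) (r : V) (Q : {set V}) (u : V) : nat :=
  #|[set v in VQ e r Q | e u v]|.

Definition AQ (V : finType) (e : rel V) (r : V) (Q : {set V}) : {set V} :=
  [set u in VQ e r Q | 3 <= degTQ e r Q u].

Definition Qprime (V : finType) (e : rel V) (r : V) (Q : {set V}) : {set V} :=
  Q :|: AQ e r Q.

Definition connected_subgraph (V : finType) (e : rel V) (VZ : {set V}) (eZ : rel V)
  : Prop :=
  [/\ symmetric eZ,
      (forall x y, eZ x y -> [&& e x y, x \in VZ & y \in VZ]) &
      (forall x y, x \in VZ -> y \in VZ -> connect eZ x y)].

Definition del_vertex (V : finType) (eZ : rel V) (u : V) : rel V :=
  [rel x y | [&& eZ x y, x != u & y != u]].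

Definition comp_del (V : finType) (VZ : {set V}) (eZ : rel V) (u w : V) : {set V} :=
  [set x in VZ :\ u | connect (del_vertex eZ u) w x].

Definition is_centroid (V : finType) (VZ : {set V}) (eZ : rel V) (QQ : {set V}) (u : V)
  : Prop :=
  u \in QQ /\
  forall w, w \in VZ :\ u -> 2 * #|comp_del VZ eZ u w :&: QQ| <= #|QQ|.

Definition centroids (V : finType) (VZ : {set V}) (eZ : rel V) (QQ : {set V}) : {set V} :=
  [set u | pb (is_centroid VZ eZ QQ u)].

From mathcomp Require Import all_boot.
From Stdlib Require Import ClassicalEpsilon.
From mathcomp Require Import zify.
Set Implicit Arguments. Unset Strict Implicit. Unset Printing Implicit Defensive.

(* Call the nodes of Q' ∩ V_Z marked.  At most two centroids: for distinct
   centroids u and v, the component of Z - u containing v and the component of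
   Z - v containing u together contain every marked node, and each holds at most
   half of them, so no marked node lies strictly between u and v.  Of three nodes
   of a tree one always lies between the other two.  This half holds for any set
   of marked nodes.

   At least one centroid: walk from a marked node into a component holding at
   least half of the marked nodes; each step enters a strictly smaller such
   component, until a node v is reached whose components all hold at most half,
   and strictly less than half except possibly the one containing the previous
   node.  If v were unmarked, three marked nodes would then lie in distinct
   components of Z - v.  Their branches at v in T all meet V_Q and at most one
   of them contains the root r, so v lies in V_Q and has three neighbours in T_Q,
   i.e. v ∈ A_Q ⊆ Q'. *)

Lemma pbP (P : Prop) : reflect P (pb P).
Proof. by rewrite /pb; case: excluded_middle_informative => HP; constructor. Qed.

Lemma card_setI_lt_notin (T : finType) (A B : {set T}) :
  #|A :&: B| < #|B| -> exists2 x, x \in B & x \notin A.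
Proof.
move=> ltAB; case: (boolP (B \subset A)) => [/setIidPr eqAB|/subsetPn[x Bx nAx]].
  by rewrite eqAB ltnn in ltAB.
by exists x.
Qed.

Section DeleteVertex.
Variable T : finType.
Implicit Types (R : rel T) (a b c u x y : T) (p : seq T).

Lemma del_vertexE R c x y : del_vertex R c x y = [&& R x y, x != c & y != c].
Proof. by []. Qed.

Lemma del_vertex_sub R c : subrel (del_vertex R c) R.
Proof. by move=> x y /and3P[]. Qed.

Lemma del_vertex_sym R c : symmetric R -> symmetric (del_vertex R c).
Proof. by move=> symR x y; rewrite !del_vertexE symR [(x != c) && _]andbC. Qed.

Lemma connect_del_vertex_sym R c : symmetric R -> connect_sym (del_vertex R c).
Proof. by move=> symR; apply/sym_connect_sym/del_vertex_sym. Qed.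

Lemma path_del_vertex R c a p : path R a p -> c \notin a :: p -> path (del_vertex R c) a p.
Proof.
elim: p a => [|y p IHp] a //= /andP[Ray pathp].
rewrite !inE !negb_or => /and3P[ca cy cp].
by rewrite del_vertexE Ray eq_sym ca eq_sym cy IHp // inE negb_or cy.
Qed.

Lemma path_del_vertex_notin R c a p : path (del_vertex R c) a p -> c \notin p.
Proof.
elim: p a => [|y p IHp] a //= /andP[/and3P[_ _ yc] /IHp cp].
by rewrite inE negb_or eq_sym yc.
Qed.

Lemma connect_del_vertex_from R c x : connect (del_vertex R c) c x -> x = c.
Proof. by case/connectP=> [[|y p]] //= /andP[/and3P[_ /eqP]]. Qed.

Lemma connect_path_last R a p y : path R a p -> y \in a :: p -> connect R y (last a p).
Proof.
elim: p a => [|z p IHp] a /=; first by move=> _; rewrite inE => /eqP->.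
case/andP=> Raz pathp; rewrite inE => /predU1P[->|]; last exact: IHp.
exact: connect_trans (connect1 Raz) (path_connect pathp (mem_last z p)).
Qed.

Lemma connect_first_step R u x : connect R u x -> u != x ->
  exists2 u1, R u u1 & connect (del_vertex R u) u1 x.
Proof.
case/connectP=> p pathp ->; case/shortenP: pathp => [[|y p']] //=; first by rewrite eqxx.
case/andP=> Ruy pathp' /andP[up' _] _ _; exists y => //.
by apply: (path_connect (path_del_vertex pathp' up')); apply: mem_last.
Qed.

Lemma acyclic_split_neighbors R c a b : symmetric R -> irreflexive R -> acyclic R ->
  R c a -> R c b -> a != b -> ~~ connect (del_vertex R c) a b.
Proof.
move=> symR irrR acycR Rca Rcb ab; apply/negP => /connectP[p pathp Eb].
case/shortenP: pathp Eb => p' pathp' uniqp' _ Eb; subst b.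
have cp' := path_del_vertex_notin pathp'.
have ca : c != a by apply: contraTneq Rca => ->; rewrite irrR.
apply: (negP (acycR (c :: a :: p') _ _)) => /=.
- by move: uniqp'; rewrite /= inE negb_or ca cp' => ->.
- by case: p' {pathp' uniqp' cp'} Rcb ab => //=; rewrite eqxx.
- by rewrite Rca rcons_path (sub_path (@del_vertex_sub R c) pathp') symR.
Qed.

Lemma uniq_path_predecessor R c a p : path R a p -> uniq (a :: p) -> c \in p ->
  exists2 m, R m c & (m \in a :: p) && connect (del_vertex R c) a m.
Proof.
elim: p a => [|y p IHp] a //= /andP[Ray pathp] /andP[ayp uniqp].
rewrite inE => /predU1P[->|cp]; first by exists a; rewrite ?mem_head ?connect0.
have [m Rmc /andP[mp ym]] := IHp y pathp uniqp cp.
exists m; rewrite // inE mp orbT /=.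
apply: connect_trans ym; apply: connect1; rewrite del_vertexE Ray.
move: uniqp => /andP[yp _].
by rewrite eq_sym (memPn ayp) ?inE ?cp ?orbT // eq_sym (memPn yp).
Qed.

Lemma uniq_path_cut R c a p q : path R a p -> uniq (a :: p) -> q \in a :: p -> q != c ->
  ~~ connect (del_vertex R c) a q ->
  exists m, [/\ R c m, m \in a :: p, c \in a :: p & connect (del_vertex R c) m q].
Proof.
elim: p a => [|y p IHp] a /=; first by move=> _ _; rewrite inE => /eqP-> _; rewrite connect0.
case/andP=> Ray pathp /andP[ayp uniqp].
rewrite inE => /predU1P[->|qp] qc; first by rewrite connect0.
have [ac|ac] := eqVneq a c.
  move=> _; exists y; rewrite -ac !inE !eqxx ?orbT; split=> //.
  by apply: (path_connect (path_del_vertex pathp _)); rewrite // -ac.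
move=> aq; have yq : ~~ connect (del_vertex R c) y q.
  have [yc|yc] := eqVneq y c.
    by apply: contra qc; rewrite yc => /connect_del_vertex_from ->.
  by apply: contra aq; apply: connect_trans; apply: connect1; rewrite del_vertexE Ray ac yc.
have [m [Rcm mp cp mq]] := IHp y pathp uniqp qp qc yq.
by exists m; split=> //; apply: mem_behead.
Qed.

Lemma sub_del_vertex_disconnected R R' v a b :
    symmetric R -> irreflexive R -> acyclic R -> symmetric R' -> subrel R' R ->
    connect R' v a -> connect R' v b -> a != v -> b != v ->
  ~~ connect (del_vertex R' v) a b -> ~~ connect (del_vertex R v) a b.
Proof.
move=> symR irrR acycR symR' subR va vb av bv ab.
have [va' vb'] : v != a /\ v != b by rewrite !(eq_sym v).
have [na Rna naa] := connect_first_step va va'.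
have [nb Rnb nbb] := connect_first_step vb vb'.
have nab : na != nb.
  apply: contraNneq ab => Enab; rewrite (connect_trans _ nbb) // -Enab.
  by rewrite connect_del_vertex_sym.
have sub_del : subrel (connect (del_vertex R' v)) (connect (del_vertex R v)).
  apply: connect_sub => x y /and3P[/subR Rxy xv yv].
  by apply: connect1; rewrite del_vertexE Rxy xv yv.
apply: contra (acyclic_split_neighbors symR irrR acycR (subR _ _ Rna) (subR _ _ Rnb) nab).
move=> /(connect_trans (sub_del _ _ naa)) nab'.
by rewrite (connect_trans nab') // connect_del_vertex_sym // sub_del.
Qed.

End DeleteVertex.

Section RootedTree.
Variables (T : finType) (e : rel T) (r : T) (Q : {set T}).
Hypotheses (e_sym : symmetric e) (e_irr : irreflexive e) (e_acyclic : acyclic e)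
  (e_conn : forall x y, connect e x y).

Local Notation VQ := (VQ e r Q).

Lemma neighbor_connect_eq c a b : e c a -> e c b -> connect (del_vertex e c) a b -> a = b.
Proof.
move=> eca ecb ab; apply/eqP; apply: contraTT ab => neq_ab.
exact: acyclic_split_neighbors e_sym e_irr e_acyclic eca ecb neq_ab.
Qed.

Lemma on_path_refl q : on_path e r q q.
Proof.
have /connectP[p pathp ->] := e_conn r q.
by case/shortenP: pathp => p' pathp' uniqp' _; exists p'; rewrite mem_last.
Qed.

Lemma memVQ u : reflect (exists2 q, q \in Q & on_path e r q u) (u \in VQ).
Proof. by rewrite inE; apply: pbP. Qed.

Lemma Qprime_sub_VQ : Qprime e r Q \subset VQ.
Proof.
apply/subsetP => x; rewrite inE => /orP[xQ|]; last by rewrite inE => /andP[].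
by apply/memVQ; exists x => //; apply: on_path_refl.
Qed.

Lemma on_path_parent c n q : e c n -> connect (del_vertex e c) n r ->
  on_path e r q c -> on_path e r q n.
Proof.
move=> ecn nr [p [pathp Eq uniqp cp]].
have cr : c != r.
  apply/eqP => Ecr; move: nr; rewrite Ecr connect_del_vertex_sym //.
  by move/connect_del_vertex_from => Enr; rewrite Ecr Enr e_irr in ecn.
have cp' : c \in p by move: cp; rewrite inE (negPf cr).
have [m emc /andP[mp rm]] := uniq_path_predecessor pathp uniqp cp'.
have -> : n = m by apply: neighbor_connect_eq ecn _ (connect_trans nr rm); rewrite e_sym.
by exists p.
Qed.

Lemma on_path_child c n q q' : e c n -> connect (del_vertex e c) n q ->
    ~~ connect (del_vertex e c) n r -> q != c -> on_path e r q' q ->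
  on_path e r q' c /\ on_path e r q' n.
Proof.
move=> ecn nq nr qc [p [pathp Eq' uniqp qp]].
have rq : ~~ connect (del_vertex e c) r q.
  by apply: contra nr => rq; rewrite (connect_trans nq) // connect_del_vertex_sym.
have [m [ecm mp cp mq]] := uniq_path_cut pathp uniqp qp qc rq.
have -> : n = m.
  apply: neighbor_connect_eq ecn ecm _.
  by rewrite (connect_trans nq) // connect_del_vertex_sym.
by split; exists p.
Qed.

Lemma VQ_child_parent c n q : e c n -> connect (del_vertex e c) n q ->
  ~~ connect (del_vertex e c) n r -> q \in VQ -> q != c -> c \in VQ.
Proof.
move=> ecn nq nr /memVQ[q' Qq' q'q] qc; apply/memVQ; exists q' => //.
exact: (on_path_child ecn nq nr qc q'q).1.
Qed.

Lemma VQ_neighbor c n q : e c n -> connect (del_vertex e c) n q ->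
  q \in VQ -> q != c -> c \in VQ -> n \in VQ.
Proof.
move=> ecn nq /memVQ[q1 Qq1 q1q] qc /memVQ[q2 Qq2 q2c]; apply/memVQ.
have [nr|nr] := boolP (connect (del_vertex e c) n r).
  by exists q2; last exact: on_path_parent ecn nr q2c.
by exists q1; last exact: (on_path_child ecn nq nr qc q1q).2.
Qed.

Lemma VQ_branching_AQ v q1 q2 q3 :
    q1 \in VQ :\ v -> q2 \in VQ :\ v -> q3 \in VQ :\ v ->
    ~~ connect (del_vertex e v) q1 q2 -> ~~ connect (del_vertex e v) q1 q3 ->
    ~~ connect (del_vertex e v) q2 q3 ->
  v \in AQ e r Q.
Proof.
move=> /setD1P[q1v V1] /setD1P[q2v V2] /setD1P[q3v V3] s12 s13 s23.
have branch q : q != v -> exists2 n, e v n & connect (del_vertex e v) n q.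
  by move=> qv; apply: connect_first_step (e_conn v q) _; rewrite eq_sym.
have [n1 e1 c1] := branch q1 q1v.
have [n2 e2 c2] := branch q2 q2v.
have [n3 e3 c3] := branch q3 q3v.
have sep a b na nb : connect (del_vertex e v) na a -> connect (del_vertex e v) nb b ->
    ~~ connect (del_vertex e v) a b -> ~~ connect (del_vertex e v) na nb.
  move=> ca cb; apply: contra => nab.
  by rewrite (connect_trans _ (connect_trans nab cb)) // connect_del_vertex_sym.
have t12 := sep _ _ _ _ c1 c2 s12; have t13 := sep _ _ _ _ c1 c3 s13.
have t23 := sep _ _ _ _ c2 c3 s23.
have Vv : v \in VQ.
  have [r1|r1] := boolP (connect (del_vertex e v) n1 r); last first.
    exact: VQ_child_parent e1 c1 r1 V1 q1v.
  apply: (VQ_child_parent e2 c2 _ V2 q2v); apply: contra t12 => r2.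
  by rewrite (connect_trans r1) // connect_del_vertex_sym.
have inTQ n q : e v n -> connect (del_vertex e v) n q -> q \in VQ -> q != v ->
    n \in [set w in VQ | e v w].
  by move=> evn nq Vq qv; rewrite inE evn (VQ_neighbor evn nq Vq qv Vv).
rewrite inE Vv; apply/card_gt2P; exists n1, n2, n3; split.
  by split; [apply: inTQ e1 c1 V1 q1v | apply: inTQ e2 c2 V2 q2v | apply: inTQ e3 c3 V3 q3v].
split; [apply: contraNneq t12 | apply: contraNneq t23 | apply: contraNneq t13].
all: by move=> ->; apply: connect0.
Qed.

End RootedTree.

Lemma card_setI_disjoint_le (T : finType) (A B C : {set T}) :
  [disjoint A & B] -> #|A :&: C| + #|B :&: C| <= #|C|.
Proof.
move=> dAB; rewrite -cardsUI setIACA (disjoint_setI0 dAB) set0I cards0 addn0 -setIUl.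
exact/subset_leq_card/subsetIr.
Qed.

Section TreeCentroids.
Variables (T : finType) (E : rel T) (VZ QQ : {set T}).
Hypotheses (E_sym : symmetric E) (E_irr : irreflexive E) (E_acyclic : acyclic E)
  (E_VZ : forall x y, E x y -> (x \in VZ) && (y \in VZ))
  (VZ_conn : forall x y, x \in VZ -> y \in VZ -> connect E x y)
  (QQ_VZ : QQ \subset VZ).

Local Notation comp := (comp_del VZ E).
Local Notation centroid := (is_centroid VZ E QQ).

Lemma mem_comp u w x :
  (x \in comp u w) = [&& x != u, x \in VZ & connect (del_vertex E u) w x].
Proof. by rewrite !inE -andbA. Qed.

Lemma mem_comp_self u w : w \in VZ -> w != u -> w \in comp u w.
Proof. by move=> Zw wu; rewrite mem_comp wu Zw connect0. Qed.

Lemma mem_comp_sym u a b : a \in VZ -> a != u -> b \in VZ -> b != u ->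
  (b \in comp u a) = (a \in comp u b).
Proof. by move=> Za au Zb bu; rewrite !mem_comp au bu Za Zb connect_del_vertex_sym. Qed.

Lemma comp_eq u a b : connect (del_vertex E u) a b -> comp u a = comp u b.
Proof.
move=> ab; apply/setP => x.
by rewrite !mem_comp (same_connect (connect_del_vertex_sym u E_sym) ab).
Qed.

Lemma comp_eq_mem u w x : x \in comp u w -> comp u w = comp u x.
Proof. by rewrite mem_comp => /and3P[_ _ /comp_eq]. Qed.

(* A path leaving [u] towards [x] either meets [v], putting [x] on the [v] side
   of [u], or avoids [v], putting [x] on the [u] side of [v]. *)
Lemma comp_cover u v x : u \in VZ -> u != v -> x \in VZ -> x != u ->
  (x \in comp u v) || (x \in comp v u).
Proof.
move=> Zu uv Zx xu; rewrite !mem_comp xu Zx /=.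
have [//|vx] := boolP (connect (del_vertex E u) v x).
have xv : x != v by apply: contraNneq vx => ->; apply: connect0.
have ux : u != x by rewrite eq_sym.
have [u1 Euu1 u1x] := connect_first_step (VZ_conn Zu Zx) ux.
case/connectP: u1x => p pathp Ex.
have vp : v \notin u1 :: p by apply: contra vx => vp; rewrite Ex connect_path_last.
have u1v : u1 != v by rewrite (memPn vp) ?mem_head.
rewrite xv Ex (connect_trans (connect1 (_ : del_vertex E v u u1))) ?del_vertexE ?Euu1 ?uv //.
have pathp' := path_del_vertex (sub_path (@del_vertex_sub _ _ _) pathp) vp.
exact: path_connect pathp' _ (mem_last _ _).
Qed.

Lemma comp_adj_disjoint u v : E u v -> [disjoint comp u v & comp v u].
Proof.
move=> Euv; apply/pred0P => x /=; apply/negbTE/andP.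
rewrite !mem_comp => -[/and3P[xu _ vx] /and3P[_ _ ux]].
have ux' : u != x by rewrite eq_sym.
have [u1 /and3P[Euu1 _ u1v] u1x] := connect_first_step ux ux'.
apply: (negP (acyclic_split_neighbors E_sym E_irr E_acyclic Euu1 Euv u1v)).
apply: connect_trans (connect_sub _ u1x) _; last by rewrite connect_del_vertex_sym.
by move=> a b /and3P[/and3P[Eab _ _] au bu]; apply: connect1; rewrite del_vertexE Eab au bu.
Qed.

Lemma centroid_between u v w : centroid u -> centroid v -> u != v -> w \in QQ ->
  w \in comp u v -> w \in comp v u -> False.
Proof.
move=> [Qu lu] [Qv lv] uv Qw wuv wvu.
have [Zu Zv] := (subsetP QQ_VZ u Qu, subsetP QQ_VZ v Qv).
have lu_v := lu v; have lv_u := lv u.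
rewrite in_setD1 eq_sym uv Zv in lu_v; rewrite in_setD1 uv Zu in lv_u.
have cover : QQ \subset comp u v :|: comp v u.
  apply/subsetP => x Qx; rewrite inE.
  have [->|xu] := eqVneq x u; first by rewrite mem_comp_self ?orbT.
  exact: comp_cover Zu uv (subsetP QQ_VZ x Qx) xu.
have meet : 0 < #|(comp u v :&: QQ) :&: (comp v u :&: QQ)|.
  by apply/card_gt0P; exists w; rewrite !in_setI wuv wvu Qw.
have := cardsUI (comp u v :&: QQ) (comp v u :&: QQ).
rewrite -setIUl (setIidPr cover); lia.
Qed.

(* [(c \in comp a b) && (c \in comp b a)] says that [c] lies strictly between [a] and [b]. *)
Lemma between3 a b c : a \in VZ -> b \in VZ -> c \in VZ -> a != b -> b != c -> c != a ->
  [\/ (c \in comp a b) && (c \in comp b a), (b \in comp a c) && (b \in comp c a)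
    | (a \in comp b c) && (a \in comp c b)].
Proof.
move=> Za Zb Zc ab bc ca.
have [ba cb ac] : [/\ b != a, c != b & a != c] by split; rewrite eq_sym.
rewrite (mem_comp_sym Zc cb Za ab) (mem_comp_sym Zc ca Zb ba) (mem_comp_sym Za ac Zb bc).
have := comp_cover Za ab Zc ca; have := comp_cover Zb bc Za ab; have := comp_cover Za ac Zb ba.
rewrite (mem_comp_sym Zc cb Za ab) (mem_comp_sym Zc ca Zb ba) (mem_comp_sym Za ac Zb bc).
case: (c \in comp a b) (c \in comp b a) (a \in comp c b) => [] [] [] //= _ _ _.
all: by [apply: Or31 | apply: Or32 | apply: Or33].
Qed.

Lemma card_centroids_le2 : #|centroids VZ E QQ| <= 2.
Proof.
rewrite leqNgt; apply/negP => /card_gt2P[u [v [w [[Cu Cv Cw] [uv vw wu]]]]].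
move: Cu Cv Cw; rewrite !inE => /pbP Cu /pbP Cv /pbP Cw.
have inZ x : centroid x -> x \in VZ by case=> /(subsetP QQ_VZ).
have uw : u != w by rewrite eq_sym.
case: (between3 (inZ u Cu) (inZ v Cv) (inZ w Cw) uv vw wu) => /andP[].
- exact: centroid_between Cu Cv uv Cw.1.
- exact: centroid_between Cu Cw uw Cv.1.
- exact: centroid_between Cv Cw vw Cu.1.
Qed.

Hypothesis QQ_branching : forall v q1 q2 q3, v \in VZ ->
  q1 \in QQ :\ v -> q2 \in QQ :\ v -> q3 \in QQ :\ v ->
  q2 \notin comp v q1 -> q3 \notin comp v q1 -> q3 \notin comp v q2 -> v \in QQ.

Lemma comp_proper_adj u v y : E u v -> u \notin comp v y -> comp v y \proper comp u v.
Proof.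
move=> Euv uy; have /andP[Zu Zv] := E_VZ Euv.
have uv : u != v by apply: contraTneq Euv => ->; rewrite E_irr.
have vu : v != u by rewrite eq_sym.
apply/properP; split; last by exists v; rewrite ?mem_comp_self // mem_comp eqxx.
apply/subsetP => z zy; move: (zy); rewrite mem_comp => /and3P[zv Zz _].
have zu : z != u by apply: contraNneq uy => <-.
case/orP: (comp_cover Zu uv Zz zu) => // zvu; case/negP: uy.
by rewrite (comp_eq_mem zy) -(comp_eq_mem zvu) mem_comp_self.
Qed.

Lemma balanced_in_QQ u v : QQ != set0 -> v \in VZ ->
    (forall y, y \in VZ :\ v -> 2 * #|comp v y :&: QQ| <= #|QQ|) ->
    (forall y, y \in VZ :\ v -> u \notin comp v y -> 2 * #|comp v y :&: QQ| < #|QQ|) ->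
  v \in QQ.
Proof.
move=> QQn0 Zv le_half lt_half; apply: contraT => vQ.
have QQv q : q \in QQ -> q \in QQ :\ v.
  by move=> Qq; rewrite in_setD1 Qq andbT; apply: contraNneq vQ => <-.
have VZv q : q \in QQ -> q \in VZ :\ v.
  by move/QQv; rewrite !in_setD1 => /andP[-> /(subsetP QQ_VZ)].
have third a b : a \in QQ -> b \in QQ -> b \notin comp v a -> u \notin comp v b -> v \in QQ.
  move=> Qa Qb ba ub.
  have : #|(comp v a :|: comp v b) :&: QQ| < #|QQ|.
    have := cardsUI (comp v a :&: QQ) (comp v b :&: QQ); rewrite -setIUl.
    have := le_half a (VZv a Qa); have := lt_half b (VZv b Qb) ub; lia.
  case/card_setI_lt_notin => q Qq; rewrite inE negb_or => /andP[qa qb].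
  exact: QQ_branching Zv (QQv a Qa) (QQv b Qb) (QQv q Qq) ba qa qb.
have [q1 Q1] := set0Pn _ QQn0.
have [q2 Q2 q2q1] : exists2 q2, q2 \in QQ & q2 \notin comp v q1.
  apply: card_setI_lt_notin; have := le_half q1 (VZv q1 Q1).
  have : 0 < #|QQ| by rewrite card_gt0.
  lia.
have [/setD1P[q1v Z1] /setD1P[q2v Z2]] := (VZv q1 Q1, VZv q2 Q2).
case/negP: vQ; have [uq2|] := boolP (u \in comp v q2); last exact: third Q1 Q2 q2q1.
apply: (third q2 q1) => //; first by rewrite mem_comp_sym.
apply: contra q2q1 => uq1.
by rewrite (comp_eq_mem uq1) -(comp_eq_mem uq2) mem_comp_self.
Qed.

Lemma heavy_comp_centroid u x : QQ != set0 -> u \in VZ -> x \in VZ :\ u ->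
  #|QQ| <= 2 * #|comp u x :&: QQ| -> exists c, centroid c.
Proof.
move=> QQn0; have [n] := ubnP #|comp u x|; elim: n => // n IHn in u x *.
rewrite ltnS => size_ux Zu /setD1P[xu Zx] heavy.
have ux : u != x by rewrite eq_sym.
have [v Euv vx] := connect_first_step (VZ_conn Zu Zx) ux.
have /andP[_ Zv] := E_VZ Euv.
have Ecomp : comp u x = comp u v by apply: comp_eq; rewrite connect_del_vertex_sym.
rewrite {}Ecomp in size_ux heavy.
have [y /and3P[Zy heavy_y uy]|light] :=
  pickP (fun y => [&& y \in VZ :\ v, #|QQ| <= 2 * #|comp v y :&: QQ| & u \notin comp v y]).
  exact: IHn v y (leq_trans (proper_card (comp_proper_adj Euv uy)) size_ux) Zv Zy heavy_y.
have lt_half y : y \in VZ :\ v -> u \notin comp v y -> 2 * #|comp v y :&: QQ| < #|QQ|.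
  by move=> Zy uy; rewrite ltnNge; have := light y; rewrite /= Zy uy andbT /= => ->.
have le_half y : y \in VZ :\ v -> 2 * #|comp v y :&: QQ| <= #|QQ|.
  move=> Zy; have [uy|/(lt_half y Zy)/ltnW //] := boolP (u \in comp v y).
  have := card_setI_disjoint_le QQ (comp_adj_disjoint Euv).
  by rewrite (comp_eq_mem uy); lia.
by exists v; split; [exact: balanced_in_QQ QQn0 Zv le_half lt_half | exact: le_half].
Qed.

Lemma centroids_gt0 : QQ != set0 -> 0 < #|centroids VZ E QQ|.
Proof.
move=> QQn0; suff [c Cc] : exists c, centroid c.
  by apply/card_gt0P; exists c; rewrite inE; apply/pbP.
have [q Qq] := set0Pn _ QQn0; have Zq := subsetP QQ_VZ q Qq.
have [w /andP[Zw heavy]|light] :=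
  pickP (fun w => (w \in VZ :\ q) && (#|QQ| < 2 * #|comp q w :&: QQ|)).
  exact: heavy_comp_centroid QQn0 Zq Zw (ltnW heavy).
by exists q; split=> // w Zw; rewrite leqNgt; have := light w; rewrite /= Zw /= => ->.
Qed.

End TreeCentroids.

Section SubtreeQprime.
Variables (T : finType) (e : rel T) (r : T) (Q VZ : {set T}) (eZ : rel T).
Hypotheses (e_sym : symmetric e) (e_irr : irreflexive e) (e_acyclic : acyclic e)
  (e_conn : forall x y, connect e x y) (eZ_e : subrel eZ e) (eZ_sym : symmetric eZ)
  (VZ_conn : forall x y, x \in VZ -> y \in VZ -> connect eZ x y).

Local Notation QQ := (Qprime e r Q :&: VZ).

Lemma Qprime_branching v q1 q2 q3 : v \in VZ ->
    q1 \in QQ :\ v -> q2 \in QQ :\ v -> q3 \in QQ :\ v ->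
    q2 \notin comp_del VZ eZ v q1 -> q3 \notin comp_del VZ eZ v q1 ->
    q3 \notin comp_del VZ eZ v q2 ->
  v \in QQ.
Proof.
move=> Zv Q1 Q2 Q3 s12 s13 s23.
have inVQ a : a \in QQ :\ v -> a \in VQ e r Q :\ v.
  case/setD1P=> av /setIP[Qa _]; rewrite in_setD1 av.
  exact: subsetP (Qprime_sub_VQ r Q e_conn) a Qa.
have sep a b : a \in QQ :\ v -> b \in QQ :\ v -> b \notin comp_del VZ eZ v a ->
    ~~ connect (del_vertex e v) a b.
  case/setD1P=> av /setIP[_ Za] /setD1P[bv /setIP[_ Zb]]; rewrite mem_comp bv Zb /=.
  exact: sub_del_vertex_disconnected (VZ_conn Zv Za) (VZ_conn Zv Zb) av bv.
rewrite in_setI Zv andbT in_setU orbC.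
by rewrite (VQ_branching_AQ e_sym e_irr e_acyclic e_conn (inVQ _ Q1) (inVQ _ Q2) (inVQ _ Q3))
  ?sep.
Qed.

End SubtreeQprime.

Theorem mainTheorem7 (V : finType) (e : rel V) (r : V) (Q : {set V})
  (VZ : {set V}) (eZ : rel V) :
  is_tree e ->
  Q != set0 ->
  connected_subgraph e VZ eZ ->
  Qprime e r Q :&: VZ != set0 ->
  1 <= #|centroids VZ eZ (Qprime e r Q :&: VZ)| <= 2.
Proof.
(* [Q != set0] is implied by the last hypothesis, since Q' is empty when Q is. *)
move=> [[e_sym e_irr] e_conn e_acyclic] _ [eZ_sym eZ_sub VZ_conn] QQn0.
have eZ_e : subrel eZ e by move=> x y /eZ_sub/and3P[].
have eZ_VZ x y : eZ x y -> (x \in VZ) && (y \in VZ) by move/eZ_sub/and3P=> [_ -> ->].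
have eZ_irr : irreflexive eZ by move=> x; apply/negP => /eZ_e; rewrite e_irr.
have eZ_acyclic : acyclic eZ.
  by move=> c uc sc; apply: contra (e_acyclic c uc sc); apply: sub_cycle.
have QQ_VZ := subsetIr (Qprime e r Q) VZ.
rewrite card_centroids_le2 // andbT; apply: centroids_gt0 => //.
exact: Qprime_branching.
Qed.
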